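(* Let $m\geqslant 2$ and let $\theta_1,\dots,\theta_m\in\mathbb{R}$. Assume that there exist indices $i,j$ with $1\leqslant i<j\leqslant m$ such that $1,\theta_i,\theta_j$ are linearly independent over $\mathbb{Q}$. Then for every $\varepsilon>0$ and every $\alpha\in\mathbb{R}$ there exist $\pmb{x}=(x_1,\dots,x_m)\in\mathbb{Z}^m\setminus\{\pmb{0}\}$ and $y\in\mathbb{Z}$ such that $$\|\theta_1x_1+\dots+\theta_mx_m-\alpha\|<\frac{\varepsilon}{|\pmb{x}|}.$$
   Context: For $w\in\mathbb{R}$, $\|w\|=\min_{a\in\mathbb{Z}}|w-a|$ denotes the distance to the nearest integer. For $\pmb{x}\in\mathbb{R}^m$, $|\pmb{x}|=\max_{1\leqslant k\leqslant m}|x_k|$ is the sup-norm. (The integer $y$ is the integer nearest to $\theta_1x_1+\dots+\theta_mx_m-\alpha$, so that $|\theta_1x_1+\dots+\theta_mx_m-y-\alpha|=\|\theta_1x_1+\dots+\theta_mx_m-\alpha\|$.) *)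

From Stdlib Require Import Reals QArith Lra Lia ZArith.
Open Scope R_scope.

Definition Q_lin_indep3 (a b : R) : Prop :=
  forall p q r : Q, Q2R p + Q2R q * a + Q2R r * b = 0 ->
    p == 0%Q /\ q == 0%Q /\ r == 0%Q.

(* Sup norm of the integer vector (x_1,...,x_m) represented by x 0, ..., x (m-1). *)
Fixpoint supnorm (m : nat) (x : nat -> Z) : R :=
  match m with
  | O => 0
  | S k => Rmax (supnorm k x) (Rabs (IZR (x k)))
  end.

(* theta_1 x_1 + ... + theta_m x_m with 0-based indices. *)
Fixpoint linform (m : nat) (theta : nat -> R) (x : nat -> Z) : R :=
  match m with
  | O => 0
  | S k => linform k theta x + theta k * IZR (x k)
  end.

(* Only two coordinates are needed, so take [a = theta_i], [b = theta_j] with [1, a, b]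
   independent.  Let [q <= Q] minimise [z = max (||q a||, ||q b||)], let [p] be the integer
   point nearest to [q (a, b)] and [e = q (a, b) - p], and consider the lattice
   [Lambda = {x | q divides x . p}] of determinant [q].  Minimality of [q] makes
   [gcd (p1, p2, q) = 1] and forces every nonzero vector of [Lambda] to have length at least
   [q z / 6]; independence makes that length at least any prescribed [L] once [Q] is large.
   Call this lower bound [lam].  If [x . p = round (q alpha) + q y], then
   [x . (a, b) - y - alpha = (x - P) . e / q] for any real [P] with
   [P . e = q alpha - round (q alpha)], and such a [P] exists with [|P| <= 1 / (2 z)].
   A reduced basis of [Lambda] gives a nonzero [x] in that coset within [O (q / lam)] of [P],
   so the error is [O (z / lam)] while [|x| = O (1 / z + q / lam)]: the product is
   [O (1 / lam) = O (1 / L)]. *)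

From Stdlib Require Import Reals QArith ZArith.
From Stdlib Require Import Lra Lia List Classical.
Open Scope R_scope.

Definition nint (t : R) : Z := Int_part (t + /2).

Definition dist_int (t : R) : R := Rabs (t - IZR (nint t)).

Lemma dist_int_le_half (t : R) : dist_int t <= /2.
Proof.
  unfold dist_int, nint. destruct (base_Int_part (t + /2)). apply Rabs_le. lra.
Qed.

Lemma Rabs_IZR_sub_ge1 (z w : Z) : z <> w -> 1 <= Rabs (IZR z - IZR w).
Proof. intros. rewrite <- minus_IZR, <- abs_IZR. apply IZR_le. lia. Qed.

Lemma dist_int_le (t : R) (z : Z) : dist_int t <= Rabs (t - IZR z).
Proof.
  destruct (Z.eq_dec z (nint t)) as [->|Hne]; [apply Rle_refl|].
  pose proof (Rabs_IZR_sub_ge1 _ _ Hne) as Hfar. pose proof (dist_int_le_half t) as Hnear.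
  pose proof (Rabs_triang (t - IZR (nint t)) (IZR z - t)) as Htri.
  replace (t - IZR (nint t) + (IZR z - t)) with (IZR z - IZR (nint t)) in Htri by ring.
  rewrite (Rabs_minus_sym (IZR z) t) in Htri. unfold dist_int in *. lra.
Qed.

Lemma dist_int_pos (t : R) : (forall z, t <> IZR z) -> 0 < dist_int t.
Proof. intros H. apply Rabs_pos_lt. specialize (H (nint t)). lra. Qed.

Lemma pigeonhole (K : nat) (f : nat -> nat) :
  (forall i, (i <= K)%nat -> (f i < K)%nat) ->
  exists i j, (i < j <= K)%nat /\ f i = f j.
Proof.
  intros Hf. apply NNPP. intros Hno.
  assert (Hnodup : NoDup (map f (seq 0 (S K)))).
  { apply NoDup_map_NoDup_ForallPairs; [|apply seq_NoDup].
    intros i j Hi Hj Hij. apply in_seq in Hi, Hj.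
    destruct (Nat.lt_total i j) as [h|[h|h]]; [|exact h|]; exfalso; apply Hno.
    - exists i, j. split; [lia|exact Hij].
    - exists j, i. split; [lia|auto]. }
  assert (Hincl : incl (map f (seq 0 (S K))) (seq 0 K)).
  { intros n Hn. apply in_map_iff in Hn as [i [<- Hi]]. apply in_seq in Hi.
    apply in_seq. specialize (Hf i ltac:(lia)). lia. }
  pose proof (NoDup_incl_length Hnodup Hincl) as Hlen.
  rewrite length_map, !length_seq in Hlen. lia.
Qed.

Lemma Int_part_bounds (x : R) (N : nat) :
  0 <= x < INR N -> (0 <= Int_part x < Z.of_nat N)%Z.
Proof.
  intros Hx. destruct (base_Int_part x). rewrite INR_IZR_INZ in Hx.
  assert (-1 < Int_part x)%Z by (apply lt_IZR; lra).
  assert (Int_part x < Z.of_nat N)%Z by (apply lt_IZR; lra). lia.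
Qed.

Lemma Int_part_eq_close (x y : R) : Int_part x = Int_part y -> Rabs (x - y) < 1.
Proof.
  intros H. destruct (base_Int_part x), (base_Int_part y). rewrite H in *.
  apply Rabs_def1; lra.
Qed.

Definition cell (N : nat) (t : R) (k : nat) : nat :=
  Z.to_nat (Int_part (INR N * frac_part (INR k * t))).

Lemma scaled_frac_part_bounds (N : nat) (t : R) :
  (1 <= N)%nat -> 0 <= INR N * frac_part t < INR N.
Proof.
  intros HN. destruct (base_fp t). assert (0 < INR N) by (apply lt_0_INR; lia). nra.
Qed.

Lemma cell_lt (N : nat) (t : R) (k : nat) : (1 <= N)%nat -> (cell N t k < N)%nat.
Proof.
  intros HN. unfold cell.
  pose proof (Int_part_bounds _ _ (scaled_frac_part_bounds N (INR k * t) HN)). lia.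
Qed.

Lemma cell_eq_dist_int (N : nat) (t : R) (i j : nat) :
  (1 <= N)%nat -> cell N t i = cell N t j ->
  dist_int (IZR (Z.of_nat j - Z.of_nat i) * t) < / INR N.
Proof.
  intros HN Hcell. unfold cell in Hcell.
  pose proof (Int_part_bounds _ _ (scaled_frac_part_bounds N (INR i * t) HN)).
  pose proof (Int_part_bounds _ _ (scaled_frac_part_bounds N (INR j * t) HN)).
  assert (Hclose : Rabs (INR N * frac_part (INR j * t) - INR N * frac_part (INR i * t)) < 1)
    by (apply Int_part_eq_close; lia).
  assert (HNpos : 0 < INR N) by (apply lt_0_INR; lia).
  eapply Rle_lt_trans;
    [apply (dist_int_le _ (Int_part (INR j * t) - Int_part (INR i * t)))|].
  rewrite <- Rmult_minus_distr_l, Rabs_mult, Rabs_right in Hclose by lra.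
  unfold frac_part in Hclose. rewrite !minus_IZR, <- !INR_IZR_INZ.
  apply (Rmult_lt_reg_l (INR N)); [lra|]. rewrite Rinv_r by lra.
  replace ((INR j - INR i) * t - (IZR (Int_part (INR j * t)) - IZR (Int_part (INR i * t))))
    with (INR j * t - IZR (Int_part (INR j * t)) - (INR i * t - IZR (Int_part (INR i * t))))
    by ring.
  exact Hclose.
Qed.

Lemma dirichlet (t : R) (N : nat) : (1 <= N)%nat ->
  exists i : Z, (1 <= i <= Z.of_nat N)%Z /\ dist_int (IZR i * t) < / INR N.
Proof.
  intros HN. destruct (pigeonhole N (cell N t)) as [i [j [Hij Hcell]]].
  { intros. apply cell_lt; auto. }
  exists (Z.of_nat j - Z.of_nat i)%Z. split; [lia|]. apply cell_eq_dist_int; auto.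
Qed.

Lemma dirichlet2 (a b : R) (N : nat) : (1 <= N)%nat ->
  exists q : Z, (1 <= q <= Z.of_nat (N * N))%Z /\
    dist_int (IZR q * a) < / INR N /\ dist_int (IZR q * b) < / INR N.
Proof.
  intros HN.
  destruct (pigeonhole (N * N) (fun k => N * cell N a k + cell N b k)%nat)
    as [i [j [Hij Hcell]]].
  { intros. pose proof (cell_lt N a i HN). pose proof (cell_lt N b i HN). nia. }
  pose proof (cell_lt N a i HN). pose proof (cell_lt N b i HN).
  pose proof (cell_lt N a j HN). pose proof (cell_lt N b j HN).
  assert (cell N a i = cell N a j) by nia.
  assert (cell N b i = cell N b j) by nia.
  exists (Z.of_nat j - Z.of_nat i)%Z. split; [lia|].
  split; apply cell_eq_dist_int; auto.
Qed.

Lemma argmin_list {A : Type} (f : A -> R) (l : list A) :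
  l <> nil -> exists x, In x l /\ forall y, In y l -> f x <= f y.
Proof.
  induction l as [|x0 l IH]; intros Hl; [congruence|].
  destruct l as [|x1 l].
  { exists x0. split; [now left|]. intros y [<-|[]]. lra. }
  destruct IH as [x [Hx Hmin]]; [discriminate|].
  destruct (Rle_lt_dec (f x0) (f x)).
  - exists x0. split; [now left|]. intros y [<-|Hy]; [lra|]. specialize (Hmin y Hy). lra.
  - exists x. split; [now right|]. intros y [<-|Hy]; [lra|]. auto.
Qed.

Definition Zrange (lo hi : Z) : list Z :=
  map (fun k => lo + Z.of_nat k)%Z (seq 0 (Z.to_nat (hi - lo + 1))).

Lemma in_Zrange (lo hi x : Z) : In x (Zrange lo hi) <-> (lo <= x <= hi)%Z.
Proof.
  unfold Zrange. rewrite in_map_iff. split.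
  - intros [k [<- Hk]]. apply in_seq in Hk. lia.
  - intros Hx. exists (Z.to_nat (x - lo)). rewrite in_seq. lia.
Qed.

Lemma argmin_Zrange (f : Z -> R) (lo hi : Z) : (lo <= hi)%Z ->
  exists q, (lo <= q <= hi)%Z /\ forall j, (lo <= j <= hi)%Z -> f q <= f j.
Proof.
  intros Hlh. destruct (argmin_list f (Zrange lo hi)) as [q [Hq Hmin]].
  { intros Hnil. assert (Hlo : In lo (Zrange lo hi)) by (apply in_Zrange; lia).
    rewrite Hnil in Hlo. destruct Hlo. }
  exists q. rewrite <- in_Zrange. split; [auto|]. intros j Hj. apply Hmin, in_Zrange, Hj.
Qed.

Definition supnorm2 (x1 x2 : Z) : R := Rmax (Rabs (IZR x1)) (Rabs (IZR x2)).

Lemma supnorm2_pos (x1 x2 : Z) : (x1 <> 0 \/ x2 <> 0)%Z -> 0 < supnorm2 x1 x2.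
Proof.
  intros [H|H]; [eapply Rlt_le_trans; [|apply Rmax_l]|eapply Rlt_le_trans; [|apply Rmax_r]];
    apply Rabs_pos_lt, not_0_IZR, H.
Qed.

Lemma supnorm2_lub (x1 x2 : Z) (K : R) :
  Rabs (IZR x1) <= K -> Rabs (IZR x2) <= K -> supnorm2 x1 x2 <= K.
Proof. apply Rmax_lub. Qed.

Lemma supnorm2_scale (g y1 y2 : Z) : (0 <= g)%Z ->
  supnorm2 (g * y1) (g * y2) = IZR g * supnorm2 y1 y2.
Proof.
  intros Hg. unfold supnorm2. rewrite !mult_IZR, !Rabs_mult, (Rabs_right (IZR g)).
  - apply RmaxRmult. now apply IZR_le.
  - apply Rle_ge. now apply IZR_le.
Qed.

Lemma supnorm2_ge1 (y1 y2 : Z) : (y1 <> 0 \/ y2 <> 0)%Z -> 1 <= supnorm2 y1 y2.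
Proof.
  intros [H|H]; [eapply Rle_trans; [|apply Rmax_l]|eapply Rle_trans; [|apply Rmax_r]];
    rewrite <- abs_IZR; apply IZR_le; lia.
Qed.

Lemma Rmax_abs_sqr_le (u v : R) :
  Rmax (Rabs u) (Rabs v) * Rmax (Rabs u) (Rabs v) <= u * u + v * v.
Proof.
  pose proof (Rabs_pos u). pose proof (Rabs_pos v).
  pose proof (Rsqr_abs u). pose proof (Rsqr_abs v). unfold Rsqr in *.
  destruct (Rle_dec (Rabs u) (Rabs v));
    [rewrite Rmax_right by auto|rewrite Rmax_left by lra]; nra.
Qed.

Lemma Rabs_dot2_le (u1 u2 w1 w2 K z : R) :
  Rabs u1 <= K -> Rabs u2 <= K -> Rabs w1 <= z -> Rabs w2 <= z ->
  Rabs (u1 * w1 + u2 * w2) <= 2 * K * z.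
Proof.
  intros Hu1 Hu2 Hw1 Hw2. eapply Rle_trans; [apply Rabs_triang|]. rewrite !Rabs_mult.
  assert (Rabs u1 * Rabs w1 <= K * z) by (apply Rmult_le_compat; auto using Rabs_pos).
  assert (Rabs u2 * Rabs w2 <= K * z) by (apply Rmult_le_compat; auto using Rabs_pos).
  lra.
Qed.

Definition Z_indep (a b : R) : Prop :=
  forall x1 x2 y : Z, IZR x1 * a + IZR x2 * b = IZR y -> x1 = 0%Z /\ x2 = 0%Z.

Lemma Q2R_inject_Z (z : Z) : Q2R (inject_Z z) = IZR z.
Proof. unfold Q2R, inject_Z. simpl. field. Qed.

Lemma Q_lin_indep3_Z_indep (a b : R) : Q_lin_indep3 a b -> Z_indep a b.
Proof.
  intros H x1 x2 y Hxy.
  destruct (H (inject_Z (- y)) (inject_Z x1) (inject_Z x2)) as [_ [H1 H2]].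
  { rewrite !Q2R_inject_Z, opp_IZR. lra. }
  unfold Qeq, inject_Z in H1, H2. simpl in H1, H2. lia.
Qed.

Lemma Z_indep_dist_int_pos (a b : R) (x1 x2 : Z) : Z_indep a b ->
  (x1 <> 0 \/ x2 <> 0)%Z -> 0 < dist_int (IZR x1 * a + IZR x2 * b).
Proof.
  intros Hind Hnz. apply dist_int_pos. intros y Hy. apply Hind in Hy. lia.
Qed.

Lemma Z_indep_box_lower (a b : R) (L : Z) : Z_indep a b -> (0 <= L)%Z ->
  exists c, 0 < c /\ forall x1 x2 : Z, (x1 <> 0 \/ x2 <> 0)%Z ->
    supnorm2 x1 x2 <= IZR L -> c <= dist_int (IZR x1 * a + IZR x2 * b).
Proof.
  intros Hind HL.
  set (F := fun x : Z * Z => if (fst x =? 0)%Z && (snd x =? 0)%Z then 1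
                             else dist_int (IZR (fst x) * a + IZR (snd x) * b)).
  set (box := list_prod (Zrange (- L) L) (Zrange (- L) L)).
  assert (Hbox : forall x1 x2, supnorm2 x1 x2 <= IZR L -> In (x1, x2) box).
  { intros x1 x2 Hx. pose proof (Rmax_l (Rabs (IZR x1)) (Rabs (IZR x2))).
    pose proof (Rmax_r (Rabs (IZR x1)) (Rabs (IZR x2))). unfold supnorm2 in Hx.
    assert (Z.abs x1 <= L /\ Z.abs x2 <= L)%Z as [H1 H2]
      by (split; apply le_IZR; rewrite abs_IZR; lra).
    apply in_prod; apply in_Zrange; lia. }
  destruct (argmin_list F box) as [[m1 m2] [_ Hmin]].
  { intros Hnil. specialize (Hbox 0%Z 0%Z).
    unfold supnorm2 in Hbox. rewrite Rabs_R0, Rmax_left, Hnil in Hbox by lra.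
    apply Hbox, IZR_le, HL. }
  exists (F (m1, m2)). split.
  - unfold F; simpl. destruct (Z.eqb_spec m1 0), (Z.eqb_spec m2 0); simpl; try lra;
      apply Z_indep_dist_int_pos; auto.
  - intros x1 x2 Hnz Hx. specialize (Hmin (x1, x2) (Hbox _ _ Hx)).
    unfold F in Hmin at 2; simpl in Hmin.
    destruct (Z.eqb_spec x1 0), (Z.eqb_spec x2 0); simpl in Hmin; auto; lia.
Qed.

Definition sim_dist (a b : R) (q : Z) : R :=
  Rmax (dist_int (IZR q * a)) (dist_int (IZR q * b)).

Lemma sim_dist_le (a b : R) (q m1 m2 : Z) :
  sim_dist a b q <= Rmax (Rabs (IZR q * a - IZR m1)) (Rabs (IZR q * b - IZR m2)).
Proof.
  apply Rmax_lub; eapply Rle_trans;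
    [apply dist_int_le| apply Rmax_l | apply dist_int_le | apply Rmax_r].
Qed.

Lemma sim_dist_le_half (a b : R) (q : Z) : sim_dist a b q <= /2.
Proof. apply Rmax_lub; apply dist_int_le_half. Qed.

Lemma sim_dist_pos (a b : R) (q : Z) : Z_indep a b -> q <> 0%Z -> 0 < sim_dist a b q.
Proof.
  intros Hind Hq. eapply Rlt_le_trans; [|apply Rmax_l].
  pose proof (Z_indep_dist_int_pos a b q 0 Hind ltac:(lia)) as Hd.
  rewrite Rmult_0_l, Rplus_0_r in Hd. exact Hd.
Qed.

Lemma gcd_pos (a b : Z) : (a <> 0 \/ b <> 0)%Z -> (0 < Z.gcd a b)%Z.
Proof.
  intros H. pose proof (Z.gcd_nonneg a b).
  assert (Z.gcd a b <> 0%Z) by (rewrite Z.gcd_eq_0; lia). lia.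
Qed.

Lemma coprime_split (x1 x2 : Z) : (x1 <> 0 \/ x2 <> 0)%Z ->
  exists g y1 y2, (0 < g)%Z /\ x1 = (g * y1)%Z /\ x2 = (g * y2)%Z /\ Z.gcd y1 y2 = 1%Z.
Proof.
  intros Hnz. pose proof (gcd_pos _ _ Hnz) as Hg. set (g := Z.gcd x1 x2) in *.
  destruct (Z.gcd_divide_l x1 x2) as [y1 E1], (Z.gcd_divide_r x1 x2) as [y2 E2].
  fold g in E1, E2. exists g, y1, y2. split; [auto|]. split; [lia|]. split; [lia|].
  replace y1 with (x1 / g)%Z by (rewrite E1, Z.div_mul; lia).
  replace y2 with (x2 / g)%Z by (rewrite E2, Z.div_mul; lia).
  apply Z.gcd_div_gcd; [lia|reflexivity].
Qed.

Lemma coprime_congr (d y1 y2 p1 p2 : Z) : Z.gcd y1 y2 = 1%Z ->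
  (d | y1 * p1 + y2 * p2)%Z -> exists t, (d | p1 + t * y2)%Z /\ (d | p2 - t * y1)%Z.
Proof.
  intros Hy Hd. destruct (Z.gcd_bezout _ _ _ Hy) as [u [v Huv]].
  exists (u * p2 - v * p1)%Z. split.
  - replace (p1 + (u * p2 - v * p1) * y2)%Z
      with (u * (y1 * p1 + y2 * p2) + p1 * (1 - (u * y1 + v * y2)))%Z by ring.
    rewrite Huv, Z.sub_diag, Z.mul_0_r, Z.add_0_r. now apply Z.divide_mul_r.
  - replace (p2 - (u * p2 - v * p1) * y1)%Z
      with (v * (y1 * p1 + y2 * p2) + p2 * (1 - (u * y1 + v * y2)))%Z by ring.
    rewrite Huv, Z.sub_diag, Z.mul_0_r, Z.add_0_r. now apply Z.divide_mul_r.
Qed.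

Lemma remainder_bound (D n M Dt delta V W : R) :
  0 < M -> M * M <= n -> Rabs Dt <= D / 2 -> Rabs delta <= / 2 ->
  Rabs V <= M -> Rabs W <= M -> Rabs (Dt / n * V + delta * W) <= D / (2 * M) + M / 2.
Proof.
  intros HM HMn HDt Hdelta HV HW.
  assert (Hn : 0 < n) by nra.
  eapply Rle_trans; [apply Rabs_triang|]. apply Rplus_le_compat.
  - unfold Rdiv at 1. rewrite !Rabs_mult, Rabs_inv, (Rabs_right n) by lra.
    apply (Rmult_le_reg_r (2 * M * n)); [nra|].
    replace (Rabs Dt * / n * Rabs V * (2 * M * n)) with (2 * Rabs Dt * (Rabs V * M))
      by (field; lra).
    replace (D / (2 * M) * (2 * M * n)) with (D * n) by (field; lra).
    pose proof (Rabs_pos Dt). pose proof (Rabs_pos V).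
    apply Rle_trans with (2 * Rabs Dt * n); [apply Rmult_le_compat_l|]; nra.
  - rewrite Rabs_mult. pose proof (Rabs_pos delta). pose proof (Rabs_pos W). nra.
Qed.

Lemma reduce_mod_basis (V11 V12 V21 V22 D R1 R2 : R) :
  V11 * V22 - V12 * V21 = D -> 0 < D ->
  let M := Rmax (Rabs V11) (Rabs V12) in
  exists t1 t2 : Z,
    Rabs (R1 - IZR t1 * V11 - IZR t2 * V21) <= D / (2 * M) + M / 2 /\
    Rabs (R2 - IZR t1 * V12 - IZR t2 * V22) <= D / (2 * M) + M / 2.
Proof.
  intros HD HDpos M.
  set (n := V11 * V11 + V12 * V12).
  assert (HMn : M * M <= n) by apply Rmax_abs_sqr_le.
  assert (HV11 : Rabs V11 <= M) by apply Rmax_l.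
  assert (HV12 : Rabs V12 <= M) by apply Rmax_r.
  assert (HM : 0 < M).
  { destruct (Req_dec V11 0) as [E11|N11].
    - destruct (Req_dec V12 0) as [E12|N12]; [rewrite E11, E12 in HD; lra|].
      pose proof (Rabs_pos_lt V12 N12). lra.
    - pose proof (Rabs_pos_lt V11 N11). lra. }
  assert (Hn : 0 < n) by nra.
  (* Round the [V2]-coordinate [det (V1, R) / D] of [R], then the orthogonal projection of
     the remainder on [V1]; what is left has a component orthogonal to [V1] of size at most
     [D / (2 |V1|)] and one along [V1] of size at most [|V1| / 2]. *)
  set (w := (V11 * R2 - V12 * R1) / D).
  set (t2 := nint w).
  set (S1 := R1 - IZR t2 * V21). set (S2 := R2 - IZR t2 * V22).
  set (Dt := V11 * S2 - V12 * S1).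
  assert (HDt : Rabs Dt <= D / 2).
  { replace Dt with (D * (w - IZR t2)) by (unfold Dt, S1, S2, w; rewrite <- HD; field; lra).
    rewrite Rabs_mult, Rabs_right by lra.
    pose proof (dist_int_le_half w) as Hw. unfold dist_int in Hw. fold t2 in Hw. nra. }
  set (mu := (S1 * V11 + S2 * V12) / n).
  set (t1 := nint mu).
  assert (Hmu : Rabs (mu - IZR t1) <= /2) by apply dist_int_le_half.
  assert (Hsplit : forall V W, Rabs V <= M -> Rabs W <= M ->
            Rabs (Dt / n * V + (mu - IZR t1) * W) <= D / (2 * M) + M / 2)
    by (intros; apply remainder_bound; auto).
  exists t1, t2. split.
  - replace (R1 - IZR t1 * V11 - IZR t2 * V21) with (Dt / n * (- V12) + (mu - IZR t1) * V11)
      by (unfold mu, Dt, S1, S2, n in *; field; lra).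
    apply Hsplit; [rewrite Rabs_Ropp|]; auto.
  - replace (R2 - IZR t1 * V12 - IZR t2 * V22) with (Dt / n * V11 + (mu - IZR t1) * V12)
      by (unfold mu, Dt, S1, S2, n in *; field; lra).
    apply Hsplit; auto.
Qed.

Section Lattice.

Variables q p1 p2 : Z.

Lemma lattice_residues : Z.gcd (Z.gcd p1 p2) q = 1%Z ->
  forall r, exists x1 x2, (q | x1 * p1 + x2 * p2 - r)%Z.
Proof.
  intros Hg r.
  destruct (Z.gcd_bezout p1 p2 _ eq_refl) as [s [t Hst]].
  destruct (Z.gcd_bezout _ _ _ Hg) as [u [v Huv]].
  exists (r * u * s)%Z, (r * u * t)%Z, (- r * v)%Z.
  rewrite <- Hst in Huv.
  replace (r * u * s * p1 + r * u * t * p2 - r)%Z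
    with (r * (u * (s * p1 + t * p2) + v * q) - r - r * v * q)%Z by ring.
  rewrite Huv. ring.
Qed.

(* Minkowski's theorem for the lattice, by pigeonhole on the residues of the
   [q + 1] points of [[0, s]^2], [s = isqrt q]. *)
Lemma short_lattice_vector : (1 <= q)%Z ->
  exists b1 b2, (b1 <> 0 \/ b2 <> 0)%Z /\ (q | b1 * p1 + b2 * p2)%Z /\
    (Z.abs b1 <= Z.sqrt q)%Z /\ (Z.abs b2 <= Z.sqrt q)%Z.
Proof.
  intros Hq. set (s := Z.sqrt q).
  destruct (Z.sqrt_spec q ltac:(lia)) as [Hs1 Hs2]. fold s in Hs1, Hs2.
  assert (Hs0 : (0 <= s)%Z) by apply Z.sqrt_nonneg.
  set (X1 := fun k : nat => (Z.of_nat k / (s + 1))%Z).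
  set (X2 := fun k : nat => (Z.of_nat k mod (s + 1))%Z).
  set (res := fun k => ((X1 k * p1 + X2 k * p2) mod q)%Z).
  assert (Hres : forall k, (0 <= res k < q)%Z) by (intros; apply Z.mod_pos_bound; lia).
  destruct (pigeonhole (Z.to_nat q) (fun k => Z.to_nat (res k))) as [i [j [Hij Hrij]]].
  { intros k _. specialize (Hres k). lia. }
  assert (Hdigits : forall k : nat, (k <= Z.to_nat q)%nat ->
     (0 <= X1 k <= s)%Z /\ (0 <= X2 k <= s)%Z /\ Z.of_nat k = ((s + 1) * X1 k + X2 k)%Z).
  { intros k Hk. unfold X1, X2.
    pose proof (Z.div_mod (Z.of_nat k) (s + 1) ltac:(lia)).
    pose proof (Z.mod_pos_bound (Z.of_nat k) (s + 1) ltac:(lia)).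
    assert (Z.of_nat k / (s + 1) < s + 1)%Z.
    { apply Z.div_lt_upper_bound; [lia|]. unfold Z.succ in Hs2. nia. }
    assert (0 <= Z.of_nat k / (s + 1))%Z by (apply Z.div_pos; lia). lia. }
  destruct (Hdigits i ltac:(lia)) as [Ai [Bi Ci]], (Hdigits j ltac:(lia)) as [Aj [Bj Cj]].
  exists (X1 j - X1 i)%Z, (X2 j - X2 i)%Z. split; [nia|]. split; [|lia].
  pose proof (Hres i). pose proof (Hres j).
  exists ((X1 j * p1 + X2 j * p2) / q - (X1 i * p1 + X2 i * p2) / q)%Z.
  pose proof (Z.div_mod (X1 i * p1 + X2 i * p2) q ltac:(lia)).
  pose proof (Z.div_mod (X1 j * p1 + X2 j * p2) q ltac:(lia)).
  unfold res in *. lia.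
Qed.

Lemma lattice_basis (b1 b2 : Z) : (1 <= q)%Z ->
  (b1 <> 0 \/ b2 <> 0)%Z -> (q | b1 * p1 + b2 * p2)%Z ->
  exists v11 v12 v21 v22, (v11 <> 0 \/ v12 <> 0)%Z /\
    (q | v11 * p1 + v12 * p2)%Z /\ (q | v21 * p1 + v22 * p2)%Z /\
    supnorm2 v11 v12 <= supnorm2 b1 b2 /\ (v11 * v22 - v12 * v21 = q)%Z.
Proof.
  intros Hq Hbnz Hb.
  destruct (coprime_split b1 b2 Hbnz) as [g [c1 [c2 [Hg [E1 [E2 Hc]]]]]].
  set (A := (c1 * p1 + c2 * p2)%Z).
  destruct (coprime_split A q ltac:(lia)) as [d [A' [k [Hd [EA [Eq HA'k]]]]]].
  assert (Hk : (1 <= k)%Z) by nia.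
  (* [v1 = k c] is the primitive lattice vector on the line of [b = g c]. *)
  assert (Hkg : (k | g)%Z).
  { apply Z.gauss with A'; [|now rewrite Z.gcd_comm].
    apply (Z.mul_divide_cancel_l _ _ d); [lia|].
    rewrite <- Eq. replace (d * (A' * g))%Z with (b1 * p1 + b2 * p2)%Z; [auto|].
    rewrite E1, E2. replace (d * (A' * g))%Z with (g * (d * A'))%Z by ring.
    rewrite <- EA. unfold A. ring. }
  assert (Hkg' : (k <= g)%Z) by (apply Z.divide_pos_le; auto).
  destruct (Z.gcd_bezout _ _ _ Hc) as [u [w Huw]].
  destruct (Z.gcd_bezout _ _ _ HA'k) as [s [t Hst]].
  set (S := (- w * p1 + u * p2)%Z).
  exists (k * c1)%Z, (k * c2)%Z, (- S * s * c1 - d * w)%Z, (- S * s * c2 + d * u)%Z.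
  split; [destruct Hbnz; [left|right]; nia|].
  split; [|split; [|split]].
  - exists A'. replace (k * c1 * p1 + k * c2 * p2)%Z with (k * A)%Z by (unfold A; ring).
    rewrite EA, Eq. ring.
  - exists (S * t)%Z.
    replace ((- S * s * c1 - d * w) * p1 + (- S * s * c2 + d * u) * p2)%Z
      with (S * (d - s * A))%Z by (unfold S, A; ring).
    rewrite EA, Eq, <- (Z.mul_1_r d), <- Hst at 1. ring.
  - rewrite E1, E2, !supnorm2_scale by lia.
    apply Rmult_le_compat_r; [apply Rle_trans with 1; [lra|]|apply IZR_le; lia].
    apply supnorm2_ge1. destruct Hbnz; [left|right]; nia.
  - replace (k * c1 * (- S * s * c2 + d * u) - k * c2 * (- S * s * c1 - d * w))%Z
      with (k * d * (u * c1 + w * c2))%Z by ring.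
    rewrite Huw. lia.
Qed.

Lemma coset_point_near (v11 v12 v21 v22 r : Z) : (1 <= q)%Z ->
  (q | v11 * p1 + v12 * p2)%Z -> (q | v21 * p1 + v22 * p2)%Z ->
  (v11 * v22 - v12 * v21 = q)%Z -> (exists z1 z2, (q | z1 * p1 + z2 * p2 - r)%Z) ->
  forall P1 P2, exists y1 y2, (q | y1 * p1 + y2 * p2 - r)%Z /\
    Rabs (IZR y1 - P1) <= IZR q / (2 * supnorm2 v11 v12) + supnorm2 v11 v12 / 2 /\
    Rabs (IZR y2 - P2) <= IZR q / (2 * supnorm2 v11 v12) + supnorm2 v11 v12 / 2.
Proof.
  intros Hq Hv1 Hv2 Hdet [z1 [z2 Hz]] P1 P2.
  destruct (reduce_mod_basis (IZR v11) (IZR v12) (IZR v21) (IZR v22) (IZR q)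
              (P1 - IZR z1) (P2 - IZR z2)) as [t1 [t2 [Hy1 Hy2]]].
  { rewrite <- !mult_IZR, <- minus_IZR. now f_equal. }
  { apply IZR_lt. lia. }
  exists (z1 + t1 * v11 + t2 * v21)%Z, (z2 + t1 * v12 + t2 * v22)%Z. split; [|split].
  - replace ((z1 + t1 * v11 + t2 * v21) * p1 + (z2 + t1 * v12 + t2 * v22) * p2 - r)%Z
      with ((z1 * p1 + z2 * p2 - r) + t1 * (v11 * p1 + v12 * p2)
            + t2 * (v21 * p1 + v22 * p2))%Z by ring.
    apply Z.divide_add_r; [apply Z.divide_add_r; [auto|]|]; now apply Z.divide_mul_r.
  - rewrite Rabs_minus_sym, !plus_IZR, !mult_IZR.
    replace (P1 - (IZR z1 + IZR t1 * IZR v11 + IZR t2 * IZR v21))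
      with (P1 - IZR z1 - IZR t1 * IZR v11 - IZR t2 * IZR v21) by ring. exact Hy1.
  - rewrite Rabs_minus_sym, !plus_IZR, !mult_IZR.
    replace (P2 - (IZR z2 + IZR t1 * IZR v12 + IZR t2 * IZR v22))
      with (P2 - IZR z2 - IZR t1 * IZR v12 - IZR t2 * IZR v22) by ring. exact Hy2.
Qed.

Lemma lattice_covering (lam B : R) : (1 <= q)%Z ->
  (forall r, exists x1 x2, (q | x1 * p1 + x2 * p2 - r)%Z) ->
  (forall x1 x2, (x1 <> 0 \/ x2 <> 0)%Z -> (q | x1 * p1 + x2 * p2)%Z ->
     lam <= supnorm2 x1 x2) ->
  0 < lam ->
  forall b1 b2, (b1 <> 0 \/ b2 <> 0)%Z -> (q | b1 * p1 + b2 * p2)%Z -> supnorm2 b1 b2 <= B ->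
  forall r P1 P2, exists x1 x2, (x1 <> 0 \/ x2 <> 0)%Z /\ (q | x1 * p1 + x2 * p2 - r)%Z /\
    Rabs (IZR x1 - P1) <= IZR q / (2 * lam) + 3 * B / 2 /\
    Rabs (IZR x2 - P2) <= IZR q / (2 * lam) + 3 * B / 2.
Proof.
  intros Hq Hres Hlong Hlam b1 b2 Hbnz Hb HbB r P1 P2.
  destruct (lattice_basis b1 b2 Hq Hbnz Hb)
    as [v11 [v12 [v21 [v22 [Hvnz [Hv1 [Hv2 [Hvb Hdet]]]]]]]].
  destruct (coset_point_near v11 v12 v21 v22 r Hq Hv1 Hv2 Hdet (Hres r) P1 P2)
    as [y1 [y2 [Hyr [Hy1 Hy2]]]].
  set (M := supnorm2 v11 v12) in *.
  assert (HlamM : lam <= M) by (apply Hlong; auto).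
  assert (Hnear : IZR q / (2 * M) + M / 2 <= IZR q / (2 * lam) + B / 2).
  { assert (IZR q / (2 * M) <= IZR q / (2 * lam)).
    { unfold Rdiv. apply Rmult_le_compat_l; [apply IZR_le; lia|].
      apply Rinv_le_contravar; lra. }
    lra. }
  destruct (Z.eq_dec y1 0), (Z.eq_dec y2 0); [|exists y1, y2; repeat split; auto; lra..].
  (* The coset point found is the origin: move to its lattice neighbour [v1]. *)
  exists (y1 + v11)%Z, (y2 + v12)%Z. split; [lia|]. split.
  { replace ((y1 + v11) * p1 + (y2 + v12) * p2 - r)%Z
      with ((y1 * p1 + y2 * p2 - r) + (v11 * p1 + v12 * p2))%Z by ring.
    now apply Z.divide_add_r. }
  assert (Rabs (IZR v11) <= M) by apply Rmax_l.
  assert (Rabs (IZR v12) <= M) by apply Rmax_r.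
  rewrite !plus_IZR. split.
  - replace (IZR y1 + IZR v11 - P1) with ((IZR y1 - P1) + IZR v11) by ring.
    pose proof (Rabs_triang (IZR y1 - P1) (IZR v11)). lra.
  - replace (IZR y2 + IZR v12 - P2) with ((IZR y2 - P2) + IZR v12) by ring.
    pose proof (Rabs_triang (IZR y2 - P2) (IZR v12)). lra.
Qed.

End Lattice.

Lemma scaled_approx_coord (theta K : R) (d i m t p P y : Z) :
  (1 <= i)%Z -> (2 * i <= d)%Z -> Rabs (IZR i * (IZR t / IZR d) - IZR m) <= 3 / IZR d ->
  (p + t * y = P * d)%Z -> Rabs (IZR y) <= K ->
  Rabs (IZR i * theta / IZR d - IZR (i * P - m * y))
    <= Rabs (theta - IZR p) / 2 + 3 * K / IZR d.
Proof.
  intros Hi Hid HD Hp Hy.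
  assert (HdR : 0 < IZR d) by (apply IZR_lt; lia).
  assert (Hi2 : 2 * IZR i <= IZR d) by (rewrite <- mult_IZR; apply IZR_le; lia).
  assert (Hi0 : 0 < IZR i) by (apply IZR_lt; lia).
  set (D := IZR i * (IZR t / IZR d) - IZR m) in HD.
  assert (HP : IZR P = (IZR p + IZR t * IZR y) / IZR d).
  { apply (Rmult_eq_reg_r (IZR d)); [|lra]. rewrite <- !mult_IZR, <- plus_IZR.
    unfold Rdiv. rewrite Rmult_assoc, Rinv_l, Rmult_1_r by lra. f_equal. lia. }
  replace (IZR i * theta / IZR d - IZR (i * P - m * y))
    with (IZR i * (theta - IZR p) / IZR d - D * IZR y)
    by (rewrite minus_IZR, !mult_IZR, HP; unfold D; field; lra).
  eapply Rle_trans; [apply Rabs_triang|]. rewrite Rabs_Ropp.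
  apply Rplus_le_compat.
  - unfold Rdiv. rewrite !Rabs_mult, Rabs_inv, (Rabs_right (IZR i)), (Rabs_right (IZR d))
      by lra.
    apply (Rmult_le_reg_r (IZR d)); [lra|].
    rewrite Rmult_assoc, Rinv_l, Rmult_1_r by lra.
    pose proof (Rabs_pos (theta - IZR p)). nra.
  - rewrite Rabs_mult. pose proof (Rabs_pos D). pose proof (Rabs_pos (IZR y)).
    apply Rle_trans with (3 / IZR d * Rabs (IZR y)); [nra|].
    unfold Rdiv. assert (0 < / IZR d) by (apply Rinv_0_lt_compat; lra). nra.
Qed.

(* As [y] is primitive, [d | y . p] makes [p] congruent mod [d] to a multiple
   [t (- y2, y1)]; a Dirichlet approximation [m / i] of [t / d] then turns
   [(i / d) theta] into a good approximant of its own. *)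
Lemma scaled_approx (theta1 theta2 : R) (d p1 p2 y1 y2 : Z) :
  (2 <= d)%Z -> Z.gcd y1 y2 = 1%Z -> (d | y1 * p1 + y2 * p2)%Z ->
  exists i p1' p2' : Z, (1 <= i)%Z /\ (2 * i <= d)%Z /\
    Rabs (IZR i * theta1 / IZR d - IZR p1')
      <= Rabs (theta1 - IZR p1) / 2 + 3 * supnorm2 y1 y2 / IZR d /\
    Rabs (IZR i * theta2 / IZR d - IZR p2')
      <= Rabs (theta2 - IZR p2) / 2 + 3 * supnorm2 y1 y2 / IZR d.
Proof.
  intros Hd Hy Hdiv.
  destruct (coprime_congr d y1 y2 p1 p2 Hy Hdiv) as [t [[P1 HP1] [P2 HP2]]].
  set (N := Z.to_nat (d / 2)).
  assert (HN : (1 <= Z.of_nat N /\ 2 * Z.of_nat N <= d <= 3 * Z.of_nat N)%Z).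
  { unfold N. rewrite Z2Nat.id by (apply Z.div_pos; lia).
    pose proof (Z.div_mod d 2 ltac:(lia)). pose proof (Z.mod_pos_bound d 2 ltac:(lia)).
    lia. }
  destruct (dirichlet (IZR t / IZR d) N ltac:(lia)) as [i [Hi Hdist]].
  set (m := nint (IZR i * (IZR t / IZR d))).
  assert (HD : Rabs (IZR i * (IZR t / IZR d) - IZR m) <= 3 / IZR d).
  { assert (HdR : 0 < IZR d) by (apply IZR_lt; lia).
    assert (HNR : 0 < INR N) by (apply lt_0_INR; lia).
    assert (IZR d <= 3 * INR N) by (rewrite INR_IZR_INZ, <- mult_IZR; apply IZR_le; lia).
    assert (/ INR N <= 3 / IZR d).
    { apply (Rmult_le_reg_r (INR N * IZR d)); [nra|].
      replace (/ INR N * (INR N * IZR d)) with (IZR d) by (field; lra).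
      replace (3 / IZR d * (INR N * IZR d)) with (3 * INR N) by (field; lra). lra. }
    unfold m. fold (dist_int (IZR i * (IZR t / IZR d))). lra. }
  exists i, (i * P1 - m * y2)%Z, (i * P2 - m * - y1)%Z.
  split; [lia|]. split; [lia|]. split.
  - apply scaled_approx_coord with t; [lia|lia|auto|lia|apply Rmax_r].
  - apply scaled_approx_coord with t; [lia|lia|auto|lia|].
    rewrite opp_IZR, Rabs_Ropp. apply Rmax_l.
Qed.

Section BestApproximation.

Variables (a b : R) (Q q : Z).
Hypothesis Hind : Z_indep a b.
Hypothesis Hq : (1 <= q <= Q)%Z.
Hypothesis Hbest : forall j, (1 <= j <= Q)%Z -> sim_dist a b q <= sim_dist a b j.

Let p1 := nint (IZR q * a).
Let p2 := nint (IZR q * b).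

Lemma best_approx_coprime : Z.gcd (Z.gcd p1 p2) q = 1%Z.
Proof.
  set (g := Z.gcd (Z.gcd p1 p2) q).
  assert (Hg : (0 < g)%Z) by (apply gcd_pos; lia).
  destruct (Z.eq_dec g 1) as [|Hg1]; [auto|exfalso].
  destruct (Z.gcd_divide_r (Z.gcd p1 p2) q) as [q' Eq].
  destruct (Z.divide_trans _ _ _ (Z.gcd_divide_l (Z.gcd p1 p2) q) (Z.gcd_divide_l p1 p2))
    as [p1' E1].
  destruct (Z.divide_trans _ _ _ (Z.gcd_divide_l (Z.gcd p1 p2) q) (Z.gcd_divide_r p1 p2))
    as [p2' E2].
  fold g in Eq, E1, E2.
  assert (Hq' : (1 <= q' <= Q)%Z) by nia.
  (* [q / g] approximates [(a, b)] [g] times better than [q] does. *)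
  assert (Hscale : sim_dist a b q
                   = IZR g * Rmax (Rabs (IZR q' * a - IZR p1')) (Rabs (IZR q' * b - IZR p2'))).
  { change (sim_dist a b q)
      with (Rmax (Rabs (IZR q * a - IZR p1)) (Rabs (IZR q * b - IZR p2))).
    rewrite <- RmaxRmult by (apply IZR_le; lia).
    rewrite <- (Rabs_right (IZR g)) by (apply Rle_ge, IZR_le; lia).
    rewrite <- !Rabs_mult, E1, E2, Eq, !mult_IZR.
    f_equal; f_equal; ring. }
  pose proof (sim_dist_le a b q' p1' p2').
  pose proof (Hbest q' Hq').
  pose proof (sim_dist_pos a b q Hind ltac:(lia)).
  assert (2 <= IZR g) by (apply IZR_le; lia).
  nra.
Qed.

Lemma best_approx_primitive_lower (d y1 y2 : Z) : (1 <= d)%Z -> (d | q)%Z ->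
  Z.gcd y1 y2 = 1%Z -> (d | y1 * p1 + y2 * p2)%Z ->
  IZR d * sim_dist a b q / 6 <= supnorm2 y1 y2.
Proof.
  intros Hd [h Eq] Hy Hdy. set (z := sim_dist a b q).
  assert (Hz : 0 < z) by (apply sim_dist_pos; auto; lia).
  assert (Hz2 : z <= /2) by apply sim_dist_le_half.
  assert (Hynz : (y1 <> 0 \/ y2 <> 0)%Z).
  { destruct (Z.eq_dec y1 0) as [->|]; [|lia].
    destruct (Z.eq_dec y2 0) as [->|]; [discriminate|lia]. }
  pose proof (supnorm2_ge1 y1 y2 Hynz).
  destruct (Z.eq_dec d 1) as [->|Hd1]; [lra|].
  apply Rnot_lt_le. intros Hshort.
  destruct (scaled_approx (IZR q * a) (IZR q * b) d p1 p2 y1 y2 ltac:(lia) Hy Hdy)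
    as [i [p1' [p2' [Hi [Hid [Ha Hb]]]]]].
  assert (HdR : 0 < IZR d) by (apply IZR_lt; lia).
  assert (Hsmall : 3 * supnorm2 y1 y2 / IZR d < z / 2).
  { apply (Rmult_lt_reg_r (2 * IZR d)); [lra|].
    replace (3 * supnorm2 y1 y2 / IZR d * (2 * IZR d)) with (6 * supnorm2 y1 y2)
      by (field; lra).
    lra. }
  (* [h i = (i / d) q < q] would approximate [(a, b)] better than [q]. *)
  assert (Hj : (1 <= h * i <= Q)%Z) by nia.
  assert (Hij : forall c, IZR i * (IZR q * c) / IZR d = IZR (h * i) * c)
    by (intros; rewrite Eq, !mult_IZR; field; lra).
  rewrite Hij in Ha, Hb.
  pose proof (sim_dist_le a b (h * i) p1' p2'). pose proof (Hbest _ Hj).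
  assert (Rmax (Rabs (IZR (h * i) * a - IZR p1')) (Rabs (IZR (h * i) * b - IZR p2')) < z).
  { assert (Rabs (IZR q * a - IZR p1) <= z) by apply Rmax_l.
    assert (Rabs (IZR q * b - IZR p2) <= z) by apply Rmax_r.
    apply Rmax_lub_lt; lra. }
  unfold z in *. lra.
Qed.

Lemma best_approx_lattice_lower (x1 x2 : Z) : (x1 <> 0 \/ x2 <> 0)%Z ->
  (q | x1 * p1 + x2 * p2)%Z -> IZR q * sim_dist a b q / 6 <= supnorm2 x1 x2.
Proof.
  intros Hnz Hx.
  destruct (coprime_split x1 x2 Hnz) as [g [y1 [y2 [Hg [E1 [E2 Hy]]]]]].
  destruct (coprime_split q g ltac:(lia)) as [h [d [g' [Hh [Eq [Eg Hdg]]]]]].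
  assert (Hd : (1 <= d)%Z) by nia.
  assert (Hdy : (d | y1 * p1 + y2 * p2)%Z).
  { apply Z.gauss with g'; [|auto].
    apply (Z.mul_divide_cancel_l _ _ h); [lia|].
    rewrite <- Eq. replace (h * (g' * (y1 * p1 + y2 * p2)))%Z with (x1 * p1 + x2 * p2)%Z;
      [auto|rewrite E1, E2, Eg; ring]. }
  assert (Hdq : (d | q)%Z) by (rewrite Eq; apply Z.divide_factor_r).
  pose proof (best_approx_primitive_lower d y1 y2 Hd Hdq Hy Hdy) as Hy_long.
  assert (Hg' : (1 <= g')%Z) by nia.
  assert (Hhg : 0 < IZR h <= IZR g) by (split; apply IZR_lt || apply IZR_le; nia).
  rewrite E1, E2, supnorm2_scale by lia.
  replace (IZR q) with (IZR h * IZR d) by (rewrite Eq, mult_IZR; reflexivity).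
  apply Rle_trans with (IZR h * supnorm2 y1 y2).
  - replace (IZR h * IZR d * sim_dist a b q / 6) with (IZR h * (IZR d * sim_dist a b q / 6))
      by field.
    apply Rmult_le_compat_l; lra.
  - apply Rmult_le_compat_r; [|lra].
    apply Rle_trans with 1; [lra|apply supnorm2_ge1; lia].
Qed.

End BestApproximation.

Lemma lattice_form_identity (a b alpha : R) (q p1 p2 x1 x2 y r : Z) : q <> 0%Z ->
  (x1 * p1 + x2 * p2 - r = y * q)%Z ->
  IZR x1 * a + IZR x2 * b - IZR y - alpha
  = (IZR x1 * (IZR q * a - IZR p1) + IZR x2 * (IZR q * b - IZR p2)
     - (IZR q * alpha - IZR r)) / IZR q.
Proof.
  intros Hq Hy. apply (f_equal IZR) in Hy. rewrite minus_IZR, plus_IZR, !mult_IZR in Hy.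
  assert (IZR q <> 0) by (apply not_0_IZR; auto).
  apply (Rmult_eq_reg_r (IZR q)); [|auto]. field_simplify; [|auto]. nra.
Qed.

Lemma lattice_lower_box (a b : R) (q L : Z) (c : R) :
  (forall x1 x2 : Z, (x1 <> 0 \/ x2 <> 0)%Z -> supnorm2 x1 x2 <= IZR L ->
     c <= dist_int (IZR x1 * a + IZR x2 * b)) ->
  (1 <= q)%Z -> 2 * IZR L * sim_dist a b q < c ->
  forall x1 x2, (x1 <> 0 \/ x2 <> 0)%Z ->
    (q | x1 * nint (IZR q * a) + x2 * nint (IZR q * b))%Z -> IZR L <= supnorm2 x1 x2.
Proof.
  intros Hbox Hq Hz x1 x2 Hnz [y Hy]. apply Rnot_lt_le. intros Hshort.
  pose proof (Hbox x1 x2 Hnz (Rlt_le _ _ Hshort)) as Hc.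
  pose proof (dist_int_le (IZR x1 * a + IZR x2 * b) y) as Hd.
  rewrite <- (Rminus_0_r (_ - IZR y)) in Hd.
  rewrite (lattice_form_identity a b 0 q (nint (IZR q * a)) (nint (IZR q * b)) x1 x2 y 0)
    in Hd by lia.
  rewrite Rmult_0_r, Rminus_0_r, Rminus_0_r in Hd.
  set (e := IZR x1 * (IZR q * a - IZR (nint (IZR q * a)))
            + IZR x2 * (IZR q * b - IZR (nint (IZR q * b)))) in Hd.
  assert (He : Rabs e <= 2 * IZR L * sim_dist a b q).
  { apply Rabs_dot2_le; [apply Rle_trans with (supnorm2 x1 x2); [apply Rmax_l|lra]
                        |apply Rle_trans with (supnorm2 x1 x2); [apply Rmax_r|lra]
                        |apply Rmax_l|apply Rmax_r]. }
  assert (HqR : 1 <= IZR q) by (apply IZR_le; lia).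
  unfold Rdiv in Hd. rewrite Rabs_mult, Rabs_inv, (Rabs_right (IZR q)) in Hd by lra.
  assert (0 < / IZR q <= 1)
    by (split; [apply Rinv_0_lt_compat|rewrite <- Rinv_1; apply Rinv_le_contravar]; lra).
  pose proof (Rabs_pos e). nra.
Qed.

Lemma small_solution (e1 e2 beta : R) : 0 < Rmax (Rabs e1) (Rabs e2) ->
  exists P1 P2, P1 * e1 + P2 * e2 = beta /\
    Rabs P1 <= Rabs beta / Rmax (Rabs e1) (Rabs e2) /\
    Rabs P2 <= Rabs beta / Rmax (Rabs e1) (Rabs e2).
Proof.
  intros Hpos. set (z := Rmax (Rabs e1) (Rabs e2)) in *.
  assert (0 <= Rabs beta / z)
    by (apply Rmult_le_pos; [apply Rabs_pos|apply Rlt_le, Rinv_0_lt_compat; lra]).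
  destruct (Rle_dec (Rabs e2) (Rabs e1)) as [Hle|Hlt].
  - assert (Hz : z = Rabs e1) by (apply Rmax_left; auto).
    assert (e1 <> 0) by (intros E; rewrite E, Rabs_R0 in Hz; lra).
    exists (beta / e1), 0. split; [field; auto|]. rewrite Rabs_R0, Hz.
    unfold Rdiv. rewrite Rabs_mult, Rabs_inv. split; [lra|]. rewrite <- Hz. lra.
  - assert (Hz : z = Rabs e2) by (apply Rmax_right; lra).
    assert (e2 <> 0) by (intros E; rewrite E, Rabs_R0 in Hz; lra).
    exists 0, (beta / e2). split; [field; auto|]. rewrite Rabs_R0, Hz.
    unfold Rdiv. rewrite Rabs_mult, Rabs_inv. split; [rewrite <- Hz; lra|lra].
Qed.

Lemma final_estimate (q z lam rho : R) : 1 <= q -> 0 < z -> 0 < lam -> 0 <= rho ->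
  rho <= 2 * q / lam -> q * z <= 6 * lam ->
  2 * rho * z / q * (/ (2 * z) + rho) <= 50 / lam.
Proof.
  intros Hq Hz Hlam Hrho Hrq Hqz.
  replace (2 * rho * z / q * (/ (2 * z) + rho)) with (rho / q + 2 * rho * rho * z / q)
    by (field; lra).
  assert (Hr : rho * lam <= 2 * q).
  { apply (Rmult_le_compat_r lam) in Hrq; [|lra].
    replace (2 * q / lam * lam) with (2 * q) in Hrq by (field; lra). lra. }
  apply (Rmult_le_reg_r (q * lam)); [nra|].
  replace ((rho / q + 2 * rho * rho * z / q) * (q * lam))
    with (rho * lam + 2 * (rho * lam) * rho * z) by (field; lra).
  replace (50 / lam * (q * lam)) with (50 * q) by (field; lra).
  assert (rho * z * lam <= 12 * lam) by nra.
  assert (rho * z <= 12) by nra.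
  nra.
Qed.

Lemma coset_point_estimate (x1 x2 : Z) (P1 P2 e1 e2 q z lam rho : R) :
  1 <= q -> 0 < z -> 0 < lam -> rho <= 2 * q / lam -> q * z <= 6 * lam ->
  Rabs e1 <= z -> Rabs e2 <= z -> Rabs P1 <= / (2 * z) -> Rabs P2 <= / (2 * z) ->
  Rabs (IZR x1 - P1) <= rho -> Rabs (IZR x2 - P2) <= rho -> (x1 <> 0 \/ x2 <> 0)%Z ->
  Rabs (((IZR x1 - P1) * e1 + (IZR x2 - P2) * e2) / q) * supnorm2 x1 x2 <= 50 / lam.
Proof.
  intros Hq Hz Hlam Hrho Hqz He1 He2 HP1 HP2 Hx1 Hx2 Hnz.
  assert (Herr : Rabs (((IZR x1 - P1) * e1 + (IZR x2 - P2) * e2) / q) <= 2 * rho * z / q).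
  { unfold Rdiv. rewrite Rabs_mult, Rabs_inv, (Rabs_right q) by lra.
    apply Rmult_le_compat_r; [apply Rlt_le, Rinv_0_lt_compat; lra|].
    now apply Rabs_dot2_le. }
  assert (Hsize : supnorm2 x1 x2 <= / (2 * z) + rho).
  { apply supnorm2_lub.
    - replace (IZR x1) with ((IZR x1 - P1) + P1) by ring.
      eapply Rle_trans; [apply Rabs_triang|]. lra.
    - replace (IZR x2) with ((IZR x2 - P2) + P2) by ring.
      eapply Rle_trans; [apply Rabs_triang|]. lra. }
  eapply Rle_trans.
  { apply Rmult_le_compat; [apply Rabs_pos|apply Rlt_le, supnorm2_pos|exact Herr|exact Hsize].
    auto. }
  apply final_estimate; auto. pose proof (Rabs_pos (IZR x1 - P1)). lra.
Qed.

Lemma inhomogeneous_approx_lattice (a b alpha lam : R) (q : Z) :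
  (1 <= q)%Z -> 0 < sim_dist a b q -> 0 < lam -> IZR q * sim_dist a b q <= 6 * lam ->
  Z.gcd (Z.gcd (nint (IZR q * a)) (nint (IZR q * b))) q = 1%Z ->
  (forall x1 x2, (x1 <> 0 \/ x2 <> 0)%Z ->
     (q | x1 * nint (IZR q * a) + x2 * nint (IZR q * b))%Z -> lam <= supnorm2 x1 x2) ->
  exists x1 x2 y : Z, (x1 <> 0 \/ x2 <> 0)%Z /\
    Rabs (IZR x1 * a + IZR x2 * b - IZR y - alpha) * supnorm2 x1 x2 <= 50 / lam.
Proof.
  intros Hq Hz Hlam Hqz Hcop Hlong.
  set (z := sim_dist a b q) in *.
  set (p1 := nint (IZR q * a)) in *. set (p2 := nint (IZR q * b)) in *.
  set (e1 := IZR q * a - IZR p1). set (e2 := IZR q * b - IZR p2).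
  assert (HqR : 1 <= IZR q) by (apply IZR_le; lia).
  destruct (short_lattice_vector q p1 p2 Hq) as [b1 [b2 [Hbnz [Hb [Hb1 Hb2]]]]].
  set (B := IZR (Z.sqrt q)).
  assert (HbB : supnorm2 b1 b2 <= B)
    by (apply supnorm2_lub; rewrite <- abs_IZR; apply IZR_le; auto).
  assert (HBq : B * lam <= IZR q).
  { assert (lam <= B) by (eapply Rle_trans; [apply Hlong|]; eauto).
    assert (B * B <= IZR q) by (unfold B; rewrite <- mult_IZR; apply IZR_le, Z.sqrt_spec; lia).
    nra. }
  set (r := nint (IZR q * alpha)). set (beta := IZR q * alpha - IZR r).
  assert (Hbeta : Rabs beta / z <= / (2 * z)).
  { pose proof (dist_int_le_half (IZR q * alpha)). unfold Rdiv. rewrite Rinv_mult.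
    apply Rmult_le_compat_r; [apply Rlt_le, Rinv_0_lt_compat|]; auto. }
  destruct (small_solution e1 e2 beta Hz) as [P1 [P2 [HP [HP1 HP2]]]].
  change (Rmax (Rabs e1) (Rabs e2)) with z in HP1, HP2.
  destruct (lattice_covering q p1 p2 lam B Hq (lattice_residues q p1 p2 Hcop) Hlong Hlam
              b1 b2 Hbnz Hb HbB r P1 P2) as [x1 [x2 [Hxnz [[y Hy] [Hx1 Hx2]]]]].
  exists x1, x2, y. split; [auto|].
  rewrite (lattice_form_identity a b alpha q p1 p2 x1 x2 y r) by (auto; lia).
  fold e1 e2 beta. rewrite <- HP.
  replace (IZR x1 * e1 + IZR x2 * e2 - (P1 * e1 + P2 * e2))
    with ((IZR x1 - P1) * e1 + (IZR x2 - P2) * e2) by ring.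
  apply (coset_point_estimate x1 x2 P1 P2 e1 e2 (IZR q) z lam (IZR q / (2 * lam) + 3 * B / 2));
    auto; try lra; [|apply Rmax_l|apply Rmax_r].
  apply (Rmult_le_reg_r (2 * lam)); [lra|].
  replace ((IZR q / (2 * lam) + 3 * B / 2) * (2 * lam)) with (IZR q + 3 * (B * lam))
    by (field; lra).
  replace (2 * IZR q / lam * (2 * lam)) with (4 * IZR q) by (field; lra). lra.
Qed.

Lemma best_approx_exists (a b eta : R) : 0 < eta ->
  exists Q q : Z, (1 <= q <= Q)%Z /\
    (forall j, (1 <= j <= Q)%Z -> sim_dist a b q <= sim_dist a b j) /\ sim_dist a b q < eta.
Proof.
  intros Heta.
  set (N := Z.to_nat (up (/ eta))).
  assert (HN : / eta < INR N).
  { destruct (archimed (/ eta)) as [Hup _].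
    assert (0 < / eta) by (apply Rinv_0_lt_compat; lra).
    unfold N. rewrite INR_IZR_INZ, Z2Nat.id; [lra|apply le_IZR; lra]. }
  assert (HNpos : 0 < INR N) by (eapply Rlt_trans; [|exact HN]; apply Rinv_0_lt_compat; lra).
  assert (HN1 : (1 <= N)%nat) by (apply INR_lt; simpl; lra).
  destruct (dirichlet2 a b N HN1) as [q0 [Hq0 [Ha0 Hb0]]].
  destruct (argmin_Zrange (sim_dist a b) 1 (Z.of_nat (N * N)) ltac:(nia)) as [q [Hq Hbest]].
  exists (Z.of_nat (N * N)), q. split; [auto|]. split; [auto|].
  apply Rle_lt_trans with (sim_dist a b q0); [auto|].
  apply Rlt_trans with (/ INR N); [apply Rmax_lub_lt; auto|].
  rewrite <- (Rinv_inv eta). apply Rinv_lt_contravar; [|auto].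
  apply Rmult_lt_0_compat; [apply Rinv_0_lt_compat|]; lra.
Qed.

Theorem inhomogeneous_approx2 (a b : R) : Z_indep a b ->
  forall eps alpha : R, 0 < eps -> exists x1 x2 y : Z, (x1 <> 0 \/ x2 <> 0)%Z /\
    Rabs (IZR x1 * a + IZR x2 * b - IZR y - alpha) * supnorm2 x1 x2 < eps.
Proof.
  intros Hind eps alpha Heps.
  set (L := up (50 / eps)).
  assert (HL : 50 / eps < IZR L) by apply archimed.
  assert (HLpos : 0 < IZR L) by (pose proof (Rdiv_lt_0_compat 50 eps ltac:(lra) Heps); lra).
  assert (HL1 : (1 <= L)%Z) by (apply lt_IZR in HLpos; lia).
  destruct (Z_indep_box_lower a b L Hind ltac:(lia)) as [c [Hc Hbox]].
  destruct (best_approx_exists a b (c / (2 * IZR L))) as [Q [q [Hq [Hbest Hqc]]]].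
  { apply Rdiv_lt_0_compat; lra. }
  set (z := sim_dist a b q) in *.
  assert (Hz : 0 < z) by (apply sim_dist_pos; auto; lia).
  set (lam := Rmax (IZR L) (IZR q * z / 6)).
  assert (HlamL : IZR L <= lam) by apply Rmax_l.
  assert (Hqz : IZR q * z <= 6 * lam).
  { pose proof (Rmax_r (IZR L) (IZR q * z / 6)) as Hr. fold lam in Hr. lra. }
  destruct (inhomogeneous_approx_lattice a b alpha lam q ltac:(lia) Hz ltac:(lra) Hqz
              (best_approx_coprime a b Q q Hind Hq Hbest)) as [x1 [x2 [y [Hnz Hbound]]]].
  { intros x1 x2 Hnz Hx. apply Rmax_lub.
    - apply (lattice_lower_box a b q L c); auto; [lia|].
      apply (Rmult_lt_compat_l (2 * IZR L)) in Hqc; [|lra].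
      replace (2 * IZR L * (c / (2 * IZR L))) with c in Hqc by (field; lra). exact Hqc.
    - apply (best_approx_lattice_lower a b Q q); auto. }
  exists x1, x2, y. split; [auto|]. eapply Rle_lt_trans; [exact Hbound|].
  apply Rle_lt_trans with (50 / IZR L).
  { unfold Rdiv. apply Rmult_le_compat_l; [lra|]. apply Rinv_le_contravar; lra. }
  apply (Rmult_lt_reg_r (IZR L)); [lra|]. apply (Rmult_lt_reg_r (/ eps)).
  { apply Rinv_0_lt_compat; lra. }
  replace (50 / IZR L * IZR L * / eps) with (50 / eps) by (field; lra).
  replace (eps * IZR L * / eps) with (IZR L) by (field; lra). auto.
Qed.

Lemma supnorm_nonneg (m : nat) (x : nat -> Z) : 0 <= supnorm m x.
Proof. induction m as [|m IH]; simpl; [lra|]. eapply Rle_trans; [exact IH|apply Rmax_l]. Qed.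

Lemma supnorm_vanishing (n d : nat) (x : nat -> Z) :
  (forall k, (n <= k < n + d)%nat -> x k = 0%Z) -> supnorm (n + d) x = supnorm n x.
Proof.
  induction d as [|d IH]; intros H0; [now rewrite Nat.add_0_r|].
  rewrite Nat.add_succ_r. simpl. rewrite IH by (intros; apply H0; lia).
  rewrite (H0 (n + d)%nat) by lia. rewrite Rabs_R0. apply Rmax_left, supnorm_nonneg.
Qed.

Lemma linform_vanishing (n d : nat) (theta : nat -> R) (x : nat -> Z) :
  (forall k, (n <= k < n + d)%nat -> x k = 0%Z) -> linform (n + d) theta x = linform n theta x.
Proof.
  induction d as [|d IH]; intros H0; [now rewrite Nat.add_0_r|].
  rewrite Nat.add_succ_r. simpl. rewrite IH by (intros; apply H0; lia).
  rewrite (H0 (n + d)%nat) by lia. ring.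
Qed.

Definition pair_vector (i j : nat) (x1 x2 : Z) : nat -> Z :=
  fun k => if Nat.eqb k i then x1 else if Nat.eqb k j then x2 else 0%Z.

Lemma pair_vector_vanishing (i j : nat) (x1 x2 : Z) (k : nat) :
  k <> i -> k <> j -> pair_vector i j x1 x2 k = 0%Z.
Proof.
  intros Hi Hj. unfold pair_vector.
  now rewrite (proj2 (Nat.eqb_neq k i) Hi), (proj2 (Nat.eqb_neq k j) Hj).
Qed.

Lemma pair_vector_fst (i j : nat) (x1 x2 : Z) : pair_vector i j x1 x2 i = x1.
Proof. unfold pair_vector. now rewrite Nat.eqb_refl. Qed.

Lemma pair_vector_snd (i j : nat) (x1 x2 : Z) : i <> j -> pair_vector i j x1 x2 j = x2.
Proof.
  intros Hij. unfold pair_vector.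
  now rewrite (proj2 (Nat.eqb_neq j i) (not_eq_sym Hij)), Nat.eqb_refl.
Qed.

Lemma supnorm_pair_vector (i j m : nat) (x1 x2 : Z) : (i < j < m)%nat ->
  supnorm m (pair_vector i j x1 x2) = supnorm2 x1 x2.
Proof.
  intros Hijm. set (x := pair_vector i j x1 x2).
  assert (Hvan : forall n d, (forall k, (n <= k < n + d)%nat -> k <> i /\ k <> j) ->
            supnorm (n + d) x = supnorm n x).
  { intros n d Hk. apply supnorm_vanishing. intros k Hnk.
    destruct (Hk k Hnk). now apply pair_vector_vanishing. }
  replace m with (S j + (m - S j))%nat by lia. rewrite Hvan by lia. simpl supnorm.
  replace j with (S i + (j - S i))%nat at 1 by lia. rewrite Hvan by lia. simpl supnorm.
  replace (supnorm i x) with (supnorm (0 + i) x) by reflexivity.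
  rewrite Hvan by lia.
  unfold x. rewrite pair_vector_fst, pair_vector_snd by lia. simpl.
  rewrite (Rmax_right 0) by apply Rabs_pos. reflexivity.
Qed.

Lemma linform_pair_vector (i j m : nat) (theta : nat -> R) (x1 x2 : Z) : (i < j < m)%nat ->
  linform m theta (pair_vector i j x1 x2) = theta i * IZR x1 + theta j * IZR x2.
Proof.
  intros Hijm. set (x := pair_vector i j x1 x2).
  assert (Hvan : forall n d, (forall k, (n <= k < n + d)%nat -> k <> i /\ k <> j) ->
            linform (n + d) theta x = linform n theta x).
  { intros n d Hk. apply linform_vanishing. intros k Hnk.
    destruct (Hk k Hnk). now apply pair_vector_vanishing. }
  replace m with (S j + (m - S j))%nat by lia. rewrite Hvan by lia. simpl linform.
  replace j with (S i + (j - S i))%nat at 1 by lia. rewrite Hvan by lia. simpl linform.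
  replace (linform i theta x) with (linform (0 + i) theta x) by reflexivity.
  rewrite Hvan by lia.
  unfold x. rewrite pair_vector_fst, pair_vector_snd by lia. simpl. ring.
Qed.

Theorem mainTheorem1 (m : nat) (theta : nat -> R) :
  (2 <= m)%nat ->
  (exists i j : nat, (i < j)%nat /\ (j < m)%nat /\ Q_lin_indep3 (theta i) (theta j)) ->
  forall eps alpha : R, 0 < eps ->
    exists (x : nat -> Z) (y : Z),
      (exists k : nat, (k < m)%nat /\ x k <> 0%Z) /\
      Rabs (linform m theta x - IZR y - alpha) < eps / supnorm m x.
Proof.
  intros _ [i [j [Hij [Hjm Hind]]]] eps alpha Heps.
  destruct (inhomogeneous_approx2 (theta i) (theta j) (Q_lin_indep3_Z_indep _ _ Hind)
              eps alpha Heps) as [x1 [x2 [y [Hnz Happrox]]]].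
  exists (pair_vector i j x1 x2), y. split.
  - destruct (Z.eq_dec x1 0).
    + exists j. rewrite pair_vector_snd by lia. split; [auto|lia].
    + exists i. rewrite pair_vector_fst. split; [lia|auto].
  - rewrite linform_pair_vector, supnorm_pair_vector by lia.
    pose proof (supnorm2_pos x1 x2 Hnz).
    apply (Rmult_lt_reg_r (supnorm2 x1 x2)); [auto|].
    unfold Rdiv. rewrite Rmult_assoc, Rinv_l, Rmult_1_r by lra.
    replace (theta i * IZR x1 + theta j * IZR x2) with (IZR x1 * theta i + IZR x2 * theta j)
      by ring.
    exact Happrox.
Qed.
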